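(* Let $K,G,m_0,A_g,B_g,\bar f_c,\bar f_t>0$, $m_g'(p)=A_g e^{\frac{p-\bar f_t/3}{B_g\bar f_c}}$, and let $p^{tr}\in\mathbb R$, $\varrho^{tr}\ge0$. For each $\gamma\ge0$ consider the equations $$p_\gamma+\gamma K\frac{m_g'(p_\gamma)}{\bar f_c}-p^{tr}=0,\qquad \varrho_\gamma-\Big[\varrho^{tr}-\gamma2G\Big(\frac{3\varrho_\gamma}{\bar f_c^2}+\frac{m_0}{\sqrt6\bar f_c}\Big)\Big]^+=0.$$ Then the maps $\hat p_{tr}:\gamma\mapsto p_\gamma$ and $\hat\varrho_{tr}:\gamma\mapsto\varrho_\gamma$ are well defined on $\mathbb R_+$ (each equation has a unique real solution). Moreover, $\hat p_{tr}$ is smooth and decreasing on $\mathbb R_+$, $\hat\varrho_{tr}$ is decreasing on $\big[0,\frac{\sqrt6\bar f_c\varrho^{tr}}{2Gm_0}\big)$, and $$\hat\varrho_{tr}(\gamma)=\frac{1}{1+\gamma\frac{6G}{\bar f_c^2}}\Big(\varrho^{tr}-\gamma\frac{2Gm_0}{\sqrt6\bar f_c}\Big)^+\quad\forall\gamma\ge0.$$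
   Context: $\mathbb R_+=[0,\infty)$; $(x)^+=\max\{0,x\}$. *)

From Stdlib Require Import Reals.
From Coquelicot Require Import Coquelicot.
Open Scope R_scope.

Definition pos_part (x : R) : R := Rmax 0 x.

Definition mgp (Ag Bg fc ft : R) (p : R) : R :=
  Ag * exp ((p - ft / 3) / (Bg * fc)).

Definition eq_p (K Ag Bg fc ft ptr gamma p : R) : Prop :=
  p + gamma * K * mgp Ag Bg fc ft p / fc - ptr = 0.

Definition eq_rho (G m0 fc rtr gamma rho : R) : Prop :=
  rho - pos_part (rtr - gamma * 2 * G * (3 * rho / fc ^ 2 + m0 / (sqrt 6 * fc))) = 0.

(* f is smooth (C^infinity) on R_+ = [0,oo): it agrees on [0,oo) with a
   function that is infinitely differentiable on an open neighbourhood
   (-eps, oo) of [0,oo). *)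
Definition smooth_on_Rplus (f : R -> R) : Prop :=
  exists (eps : R) (g : R -> R), 0 < eps /\
    (forall x, 0 <= x -> g x = f x) /\
    (forall (k : nat) (x : R), - eps < x -> ex_derive (Derive_n g k) x).

Definition decreasing_on (D : R -> Prop) (f : R -> R) : Prop :=
  forall x y, D x -> D y -> x < y -> f y < f x.

(* Solving the pressure equation for gamma gives gamma = (ptr - p) / (a m(p)) with
   m = m_g', a = K / fc, b = Bg fc and m' = m / b.  This is strictly decreasing on
   (-oo, ptr + b) and unbounded there, so the pressure map is its inverse, which by
   the inverse function theorem has derivative -a b m(p) / (ptr + b - p) at p.  That
   derivative is a polynomial in p, m(p) and 1 / (ptr + b - p); this class is closed
   under differentiation, so by induction every derivative of the pressure map is
   such an expression evaluated along the map, hence it is smooth on a neighbourhood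
   of [0, oo).  The deviatoric equation has the form r = (d - u r)^+ with u >= 0,
   whose only solution is r = d^+ / (1 + u). *)

From Stdlib Require Import Reals Lra Ranalysis5 ClassicalEpsilon.
From Coquelicot Require Import Coquelicot.
Open Scope R_scope.

Lemma continuity_of_is_derive (f df : R -> R) :
  (forall x, is_derive f x (df x)) -> continuity f.
Proof.
  intros f_deriv x. apply continuity_pt_filterlim.
  apply (ex_derive_continuous (V := R_NormedModule)). eexists. apply f_deriv.
Qed.

Section IncreasingInverse.

Variables (f df : R -> R) (c : R).
Hypothesis f_deriv : forall x, is_derive f x (df x).
Hypothesis df_pos : forall x, x < c -> 0 < df x.
Hypothesis f_unbounded_below : forall s, exists x, x < c /\ f x < s.

Lemma increasing_below x y : x < y -> y < c -> f x < f y.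
Proof.
  intros hxy hy. apply (incr_function f m_infty (Finite c) df); simpl; auto.
  intros z _ hz. apply df_pos, hz.
Qed.

Lemma injective_below x y : x < c -> y < c -> f x = f y -> x = y.
Proof.
  intros hx hy he. destruct (Rtotal_order x y) as [h|[h|h]]; auto.
  - pose proof (increasing_below x y h hy). lra.
  - pose proof (increasing_below y x h hx). lra.
Qed.

Lemma preimage_below s : s < f c -> exists x, x < c /\ f x = s.
Proof.
  intros hs. destruct (f_unbounded_below s) as [lb [hlb hflb]].
  destruct (IVT_gen f lb c s (continuity_of_is_derive f df f_deriv)) as [x [hx hfx]].
  { rewrite Rmin_left, Rmax_right; lra. }
  rewrite Rmin_left, Rmax_right in hx by lra.
  exists x. split; auto.
  destruct (Rle_lt_or_eq_dec x c) as [h|h]; [lra|easy|]. subst x. lra.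
Qed.

Definition inv_below (s : R) : R :=
  epsilon (inhabits 0) (fun x => x < c /\ f x = s).

Lemma inv_below_spec s : s < f c -> inv_below s < c /\ f (inv_below s) = s.
Proof. intros hs. unfold inv_below. apply epsilon_spec, preimage_below, hs. Qed.

Lemma inv_below_unique s x : s < f c -> x < c -> f x = s -> inv_below s = x.
Proof.
  intros hs hx hfx. destruct (inv_below_spec s hs) as [h1 h2].
  apply injective_below; congruence.
Qed.

Lemma inv_below_lt s t : s < t -> t < f c -> inv_below s < inv_below t.
Proof.
  intros hst ht.
  destruct (inv_below_spec s ltac:(lra)) as [hs1 hs2].
  destruct (inv_below_spec t ht) as [ht1 ht2].
  destruct (Rtotal_order (inv_below s) (inv_below t)) as [h|[h|h]]; auto.
  - rewrite h in hs2. lra.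
  - pose proof (increasing_below _ _ h hs1). lra.
Qed.

Lemma inv_below_le s t : s <= t -> t < f c -> inv_below s <= inv_below t.
Proof.
  intros [h|h] ht; [left; apply inv_below_lt; auto|subst; lra].
Qed.

Section AtAPoint.

Variable s : R.
Hypothesis hs : s < f c.

Let ls := s - 1.
Let us := (s + f c) / 2.
Let ls_lt : ls < s. Proof. unfold ls; lra. Qed.
Let us_bounds : s < us < f c. Proof. unfold us; lra. Qed.

Let f_inv t : ls <= t <= us -> f (inv_below t) = t.
Proof. intros ht. apply inv_below_spec. pose proof us_bounds. lra. Qed.

Let inv_mono t : ls <= t <= us -> inv_below ls <= inv_below t <= inv_below us.
Proof. intros ht. pose proof us_bounds. split; apply inv_below_le; lra. Qed.

Lemma inv_below_continuous : continuity_pt inv_below s.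
Proof.
  pose proof ls_lt. pose proof us_bounds.
  apply (continuity_pt_recip_interv f inv_below (inv_below ls) (inv_below us)).
  - apply inv_below_lt; lra.
  - intros x y _ hxy hy. apply increasing_below; [exact hxy|].
    apply Rle_lt_trans with (inv_below us); [exact hy|apply inv_below_spec; lra].
  - intros t h1 h2. rewrite !f_inv in h1, h2 by lra.
    unfold comp, id. apply f_inv; lra.
  - intros t h1 h2. rewrite !f_inv in h1, h2 by lra. apply inv_mono; lra.
  - intros x _. apply continuity_of_is_derive with df, f_deriv.
  - rewrite !f_inv by lra. lra.
Qed.

Lemma inv_below_deriv : is_derive inv_below s (/ df (inv_below s)).
Proof.
  pose proof ls_lt. pose proof us_bounds.
  set (f_derivable := fun x => exist _ (df x)
         (proj1 (is_derive_Reals f x (df x)) (f_deriv x)) : derivable_pt f x).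
  pose proof (derivable_pt_lim_recip_interv f inv_below ls us s
     (fun x _ => f_derivable x) inv_below_continuous ltac:(lra) ltac:(lra)
     (inv_mono s ltac:(lra))) as recip.
  simpl in recip. apply is_derive_Reals.
  replace (/ df (inv_below s)) with (1 / df (inv_below s)) by (unfold Rdiv; ring).
  apply recip.
  - intros t ht. apply f_inv, ht.
  - apply Rgt_not_eq, df_pos, inv_below_spec, hs.
Qed.

End AtAPoint.

End IncreasingInverse.

Section ExpRationalExpressions.

Variables (m : R -> R) (b c : R).
Hypothesis m_deriv : forall x, is_derive m x (m x / b).

(* Closed under [deriv_expr] because [m' = m / b] and [(1 / (c - x))' = (1 / (c - x))^2]. *)
Inductive expr : Type :=
| Cst (r : R)
| Var
| Mx
| Pole
| Add (t1 t2 : expr)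
| Mul (t1 t2 : expr).

Fixpoint eval_expr (t : expr) (x : R) : R :=
  match t with
  | Cst r => r
  | Var => x
  | Mx => m x
  | Pole => / (c - x)
  | Add t1 t2 => eval_expr t1 x + eval_expr t2 x
  | Mul t1 t2 => eval_expr t1 x * eval_expr t2 x
  end.

Fixpoint deriv_expr (t : expr) : expr :=
  match t with
  | Cst _ => Cst 0
  | Var => Cst 1
  | Mx => Mul (Cst (/ b)) Mx
  | Pole => Mul Pole Pole
  | Add t1 t2 => Add (deriv_expr t1) (deriv_expr t2)
  | Mul t1 t2 => Add (Mul (deriv_expr t1) t2) (Mul t1 (deriv_expr t2))
  end.

Lemma is_derive_eval_expr t x : x < c ->
  is_derive (eval_expr t) x (eval_expr (deriv_expr t) x).
Proof.
  intros hx. induction t as [r| | | |t1 IH1 t2 IH2|t1 IH1 t2 IH2]; simpl.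
  - auto_derive; easy.
  - auto_derive; easy.
  - replace (/ b * m x) with (m x / b) by (unfold Rdiv; ring). apply m_deriv.
  - auto_derive; [lra|]. field. lra.
  - apply (is_derive_plus (eval_expr t1) (eval_expr t2)); auto.
  - apply (is_derive_mult (eval_expr t1) (eval_expr t2)); auto. intros; apply Rmult_comm.
Qed.

Section AutonomousEquation.

Variables (g : R -> R) (l : R) (phi : expr).
Hypothesis g_lt : forall x, l < x -> g x < c.
Hypothesis g_deriv : forall x, l < x -> is_derive g x (eval_expr phi (g x)).

Fixpoint iter_deriv_expr (n : nat) : expr :=
  match n with
  | O => Var
  | S n => Mul (deriv_expr (iter_deriv_expr n)) phi
  end.

Lemma is_derive_Derive_n n x : l < x ->
  (forall y, l < y -> Derive_n g n y = eval_expr (iter_deriv_expr n) (g y)) ->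
  is_derive (Derive_n g n) x (eval_expr (iter_deriv_expr (S n)) (g x)).
Proof.
  intros hx Dn_eval.
  apply is_derive_ext_loc with (fun y => eval_expr (iter_deriv_expr n) (g y)).
  - apply (locally_interval _ x (Finite l) p_infty); simpl; auto.
    intros y hy _. symmetry. apply Dn_eval, hy.
  - simpl. rewrite Rmult_comm.
    apply (is_derive_comp (eval_expr (iter_deriv_expr n)) g x); auto.
    apply is_derive_eval_expr, g_lt, hx.
Qed.

Lemma Derive_n_eval_expr n x : l < x ->
  Derive_n g n x = eval_expr (iter_deriv_expr n) (g x).
Proof.
  revert x. induction n as [|n IH]; intros x hx; [reflexivity|].
  apply is_derive_unique, is_derive_Derive_n; auto.
Qed.

Lemma ex_derive_Derive_n n x : l < x -> ex_derive (Derive_n g n) x.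
Proof.
  intros hx. eexists. apply is_derive_Derive_n; auto. apply Derive_n_eval_expr.
Qed.

End AutonomousEquation.
End ExpRationalExpressions.

Section PressureEquation.

Variables (m : R -> R) (a b ptr : R).
Hypothesis ha : 0 < a.
Hypothesis hb : 0 < b.
Hypothesis m_pos : forall x, 0 < m x.
Hypothesis m_deriv : forall x, is_derive m x (m x / b).

(* The pressure equation [p + gamma a m p = ptr] solved for [gamma]. *)
Definition gamma_of (p : R) : R := (ptr - p) / (a * m p).

Let m_le x y : x <= y -> m x <= m y.
Proof.
  intros [hxy|<-]; [left|lra].
  apply (incr_function m m_infty p_infty (fun x => m x / b)); simpl; auto.
  intros z _ _. apply Rdiv_lt_0_compat; auto.
Qed.

Lemma is_derive_neg_gamma_of p :
  is_derive (fun p : R => - gamma_of p) p ((ptr + b - p) / (a * b * m p)).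
Proof.
  pose proof (m_pos p) as hm.
  apply (is_derive_ext (fun p => (p - ptr) * / (a * m p))).
  { intros q. unfold gamma_of. simpl. unfold Rdiv. ring. }
  replace ((ptr + b - p) / (a * b * m p))
    with (1 * / (a * m p) + (p - ptr) * (- (a * (m p / b)) / (a * m p) ^ 2))
    by (field; repeat split; lra).
  apply (is_derive_mult (fun p => p - ptr) (fun p => / (a * m p))).
  - auto_derive; easy.
  - apply (is_derive_inv (fun p => a * m p)).
    + apply (is_derive_scal m), m_deriv.
    + apply Rgt_not_eq, Rmult_lt_0_compat; auto.
  - intros; apply Rmult_comm.
Qed.

Lemma neg_gamma_of_unbounded_below s : exists p, p < ptr + b /\ - gamma_of p < s.
Proof.
  pose proof (m_pos ptr) as hm.
  set (p := ptr - 1 - Rabs s * (a * m ptr)).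
  assert (hp : p - ptr = - 1 - Rabs s * (a * m ptr)) by (unfold p; ring).
  assert (hs : 0 <= Rabs s * (a * m ptr))
    by (apply Rmult_le_pos; [apply Rabs_pos|nra]).
  exists p. split; [lra|].
  assert (hmp : 0 < a * m p <= a * m ptr).
  { pose proof (m_pos p). pose proof (m_le p ptr ltac:(lra)). nra. }
  (* [m] is increasing, so below [ptr] the denominator is at most [a m ptr]. *)
  assert (h : - gamma_of p <= (p - ptr) / (a * m ptr)).
  { unfold gamma_of, Rdiv.
    replace (- ((ptr - p) * / (a * m p))) with ((p - ptr) * / (a * m p)) by ring.
    apply Rmult_le_compat_neg_l; [lra|]. apply Rinv_le_contravar; lra. }
  assert (h' : (p - ptr) / (a * m ptr) = - / (a * m ptr) - Rabs s)
    by (rewrite hp; field; lra).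
  pose proof (Rle_abs (- s)). rewrite Rabs_Ropp in *.
  pose proof (Rinv_0_lt_compat (a * m ptr) ltac:(nra)). lra.
Qed.

Lemma neg_gamma_of_deriv_pos p : p < ptr + b -> 0 < (ptr + b - p) / (a * b * m p).
Proof.
  intros hp. pose proof (m_pos p).
  apply Rdiv_lt_0_compat; [lra|]. repeat apply Rmult_lt_0_compat; auto.
Qed.

(* [gamma_of] decreases on [(-oo, ptr + b)] and is stationary at [ptr + b]. *)
Definition gamma_of_inv (gamma : R) : R :=
  inv_below (fun p => - gamma_of p) (ptr + b) (- gamma).

Lemma gamma_of_critical_neg : gamma_of (ptr + b) < 0.
Proof.
  pose proof (m_pos (ptr + b)). unfold gamma_of.
  replace (ptr - (ptr + b)) with (- b) by ring.
  unfold Rdiv. rewrite Ropp_mult_distr_l_reverse. apply Ropp_lt_gt_0_contravar.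
  apply Rmult_lt_0_compat; [lra|]. apply Rinv_0_lt_compat; nra.
Qed.

Lemma gamma_of_inv_spec gamma : gamma_of (ptr + b) < gamma ->
  gamma_of_inv gamma < ptr + b /\ gamma_of (gamma_of_inv gamma) = gamma.
Proof.
  intros hg. unfold gamma_of_inv.
  destruct (inv_below_spec _ _ _ is_derive_neg_gamma_of neg_gamma_of_unbounded_below
              (- gamma) ltac:(lra)) as [h1 h2].
  cbv beta in h2. split; [exact h1|lra].
Qed.

Lemma gamma_of_inv_unique gamma p : 0 <= gamma -> gamma_of p = gamma ->
  gamma_of_inv gamma = p.
Proof.
  intros hg hp. pose proof gamma_of_critical_neg.
  assert (p_le : p <= ptr).
  { pose proof (m_pos p). unfold gamma_of in hp.
    assert (0 <= ptr - p); [|lra].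
    replace (ptr - p) with (gamma * (a * m p)) by (rewrite <- hp; field; nra).
    apply Rmult_le_pos; nra. }
  apply (inv_below_unique _ _ _ is_derive_neg_gamma_of neg_gamma_of_deriv_pos
           neg_gamma_of_unbounded_below); lra.
Qed.

Lemma gamma_of_inv_decreasing x y : gamma_of (ptr + b) < x -> x < y ->
  gamma_of_inv y < gamma_of_inv x.
Proof.
  intros hx hxy. apply (inv_below_lt _ _ _ is_derive_neg_gamma_of
    neg_gamma_of_deriv_pos neg_gamma_of_unbounded_below); lra.
Qed.

(* [-1 / gamma_of'], i.e. the derivative of [gamma_of_inv] in terms of its value. *)
Definition gamma_of_inv_rate : expr := Mul (Cst (- (a * b))) (Mul Mx Pole).

Lemma is_derive_gamma_of_inv gamma : gamma_of (ptr + b) < gamma ->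
  is_derive gamma_of_inv gamma
    (eval_expr m (ptr + b) gamma_of_inv_rate (gamma_of_inv gamma)).
Proof.
  intros hg. destruct (gamma_of_inv_spec gamma hg) as [hlt _].
  pose proof (m_pos (gamma_of_inv gamma)).
  unfold gamma_of_inv in *.
  set (p := inv_below (fun p => - gamma_of p) (ptr + b) (- gamma)) in *.
  replace (eval_expr m (ptr + b) gamma_of_inv_rate p)
    with (-1 * / ((ptr + b - p) / (a * b * m p)))
    by (simpl; field; repeat split; lra).
  apply (is_derive_comp (inv_below (fun p : R => - gamma_of p) (ptr + b))
           (fun y => - y) gamma).
  - apply (inv_below_deriv _ _ _ is_derive_neg_gamma_of neg_gamma_of_deriv_pos
             neg_gamma_of_unbounded_below). lra.
  - auto_derive; [easy|ring].
Qed.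

Lemma gamma_of_inv_smooth k gamma : gamma_of (ptr + b) < gamma ->
  ex_derive (Derive_n gamma_of_inv k) gamma.
Proof.
  apply (ex_derive_Derive_n m b (ptr + b) m_deriv gamma_of_inv (gamma_of (ptr + b))
           gamma_of_inv_rate).
  - intros x hx. apply gamma_of_inv_spec, hx.
  - apply is_derive_gamma_of_inv.
Qed.

End PressureEquation.

Lemma decreasing_on_ext (D : R -> Prop) (f g : R -> R) :
  (forall x, D x -> f x = g x) -> decreasing_on D g -> decreasing_on D f.
Proof. intros hfg hg x y hx hy hxy. rewrite !hfg by assumption. auto. Qed.

Lemma smooth_on_Rplus_ext (f g : R -> R) :
  (forall x, 0 <= x -> f x = g x) -> smooth_on_Rplus g -> smooth_on_Rplus f.
Proof.
  intros hfg [eps [h [heps [hh hsmooth]]]]. exists eps, h.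
  split; [exact heps|split; [|exact hsmooth]].
  intros x hx. rewrite hfg by exact hx. apply hh, hx.
Qed.

Lemma ex_unique_of_iff {A : Type} (P : A -> Prop) (v : A) :
  (forall x, P x <-> x = v) -> exists! x, P x.
Proof.
  intros h. exists v.
  split; [apply h; reflexivity|intros x hx; symmetry; apply h, hx].
Qed.

Lemma mgp_pos Ag Bg fc ft p : 0 < Ag -> 0 < mgp Ag Bg fc ft p.
Proof. intros hA. apply Rmult_lt_0_compat; [exact hA|apply exp_pos]. Qed.

Lemma is_derive_mgp Ag Bg fc ft p : 0 < Bg * fc ->
  is_derive (mgp Ag Bg fc ft) p (mgp Ag Bg fc ft p / (Bg * fc)).
Proof.
  intros hb. unfold mgp. set (b := Bg * fc) in *.
  auto_derive; [easy|]. unfold Rminus, Rdiv. field. lra.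
Qed.

Section MgpPressure.

Variables (K Ag Bg fc ft ptr : R).
Hypotheses (HK : 0 < K) (HAg : 0 < Ag) (HBg : 0 < Bg) (Hfc : 0 < fc).

Let a_pos : 0 < K / fc.
Proof. apply Rdiv_lt_0_compat; assumption. Qed.

Let b_pos : 0 < Bg * fc.
Proof. apply Rmult_lt_0_compat; assumption. Qed.

Let m_pos : forall p, 0 < mgp Ag Bg fc ft p.
Proof. intros p. apply mgp_pos, HAg. Qed.

Let m_deriv : forall p, is_derive (mgp Ag Bg fc ft) p (mgp Ag Bg fc ft p / (Bg * fc)).
Proof. intros p. apply is_derive_mgp, b_pos. Qed.

Definition pressure_map : R -> R := gamma_of_inv (mgp Ag Bg fc ft) (K / fc) (Bg * fc) ptr.

Lemma eq_p_iff_gamma_of gamma p :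
  eq_p K Ag Bg fc ft ptr gamma p <-> gamma_of (mgp Ag Bg fc ft) (K / fc) ptr p = gamma.
Proof.
  pose proof (m_pos p). set (mp := mgp Ag Bg fc ft p) in *. unfold eq_p, gamma_of. fold mp.
  replace (gamma * K * mp / fc) with (gamma * (K / fc * mp)) by (field; lra).
  split; intros h.
  - replace (ptr - p) with (gamma * (K / fc * mp)) by lra. field. split; lra.
  - rewrite <- h. field. split; lra.
Qed.

Lemma eq_p_iff_pressure_map gamma p : 0 <= gamma ->
  eq_p K Ag Bg fc ft ptr gamma p <-> p = pressure_map gamma.
Proof.
  intros hg. rewrite eq_p_iff_gamma_of. unfold pressure_map.
  pose proof (gamma_of_critical_neg _ _ _ ptr a_pos b_pos m_pos).
  split; intros h.
  - symmetry. apply gamma_of_inv_unique; auto.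
  - subst p. apply gamma_of_inv_spec; auto; lra.
Qed.

Lemma pressure_map_smooth : smooth_on_Rplus pressure_map.
Proof.
  pose proof (gamma_of_critical_neg _ _ _ ptr a_pos b_pos m_pos).
  exists (- gamma_of (mgp Ag Bg fc ft) (K / fc) ptr (ptr + Bg * fc)), pressure_map.
  split; [lra|split; [reflexivity|]].
  intros k x hx. apply gamma_of_inv_smooth; auto. lra.
Qed.

Lemma pressure_map_decreasing : decreasing_on (fun gamma => 0 <= gamma) pressure_map.
Proof.
  intros x y hx _ hxy. pose proof (gamma_of_critical_neg _ _ _ ptr a_pos b_pos m_pos).
  apply gamma_of_inv_decreasing; auto. lra.
Qed.

End MgpPressure.

Lemma pos_part_fixpoint_iff a d r : 0 <= a ->
  r - pos_part (d - a * r) = 0 <-> r = / (1 + a) * pos_part d.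
Proof.
  intros ha. unfold pos_part. split; intros h.
  - destruct (Rle_or_lt 0 (d - a * r)) as [hd|hd].
    + rewrite Rmax_right in h by lra.
      rewrite Rmax_right by nra. field_simplify_eq; lra.
    + rewrite Rmax_left in h by lra. rewrite Rmax_left by nra. lra.
  - destruct (Rle_or_lt 0 d) as [hd|hd].
    + rewrite Rmax_right in h by lra.
      assert (hr : r * (1 + a) = d) by (rewrite h; field; lra).
      assert (0 <= r)
        by (rewrite h; apply Rmult_le_pos; [left; apply Rinv_0_lt_compat|]; lra).
      rewrite Rmax_right by nra. lra.
    + rewrite Rmax_left in h by lra. rewrite Rmult_0_r in h. subst r.
      rewrite Rmult_0_r, Rminus_0_r, Rmax_left by lra. ring.
Qed.

Definition rho_closed (G m0 fc rtr gamma : R) : R :=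
  / (1 + gamma * (6 * G / fc ^ 2)) * pos_part (rtr - gamma * (2 * G * m0 / (sqrt 6 * fc))).

Lemma eq_rho_iff_rho_closed G m0 fc rtr gamma r : 0 <= G -> 0 < fc -> 0 <= gamma ->
  eq_rho G m0 fc rtr gamma r <-> r = rho_closed G m0 fc rtr gamma.
Proof.
  intros hG hfc hg. unfold eq_rho, rho_closed.
  assert (hs : 0 < sqrt 6) by (apply sqrt_lt_R0; lra).
  replace (rtr - gamma * 2 * G * (3 * r / fc ^ 2 + m0 / (sqrt 6 * fc)))
    with (rtr - gamma * (2 * G * m0 / (sqrt 6 * fc)) - gamma * (6 * G / fc ^ 2) * r)
    by (field; lra).
  apply pos_part_fixpoint_iff.
  apply Rmult_le_pos; [exact hg|]. apply Rdiv_le_0_compat; [lra|apply pow_lt, hfc].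
Qed.

Lemma shrunk_pos_part_decreasing r q u x y :
  0 < q -> 0 <= u -> 0 <= x -> x < y -> y * q < r ->
  / (1 + y * u) * pos_part (r - y * q) < / (1 + x * u) * pos_part (r - x * q).
Proof.
  intros hq hu hx hxy hyq. unfold pos_part. rewrite !Rmax_right by nra.
  apply Rle_lt_trans with (/ (1 + x * u) * (r - y * q)).
  - apply Rmult_le_compat_r; [lra|]. apply Rinv_le_contravar; nra.
  - apply Rmult_lt_compat_l; [apply Rinv_0_lt_compat; nra|nra].
Qed.

Lemma rho_closed_decreasing G m0 fc rtr : 0 < G -> 0 < m0 -> 0 < fc ->
  decreasing_on (fun gamma => 0 <= gamma < sqrt 6 * fc * rtr / (2 * G * m0))
                (rho_closed G m0 fc rtr).
Proof.
  intros hG hm0 hfc x y [hx _] [_ hy] hxy.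
  assert (hs : 0 < sqrt 6) by (apply sqrt_lt_R0; lra).
  set (q := 2 * G * m0 / (sqrt 6 * fc)).
  assert (hq : 0 < q) by (apply Rdiv_lt_0_compat; nra).
  apply shrunk_pos_part_decreasing; auto.
  - apply Rdiv_le_0_compat; [lra|apply pow_lt, hfc].
  - apply Rmult_lt_compat_r with (r := q) in hy; [|exact hq].
    replace (sqrt 6 * fc * rtr / (2 * G * m0) * q) with rtr in hy
      by (unfold q; field; repeat split; lra).
    exact hy.
Qed.

Theorem lemma1 (K G m0 Ag Bg fc ft ptr rtr : R)
  (HK : 0 < K) (HG : 0 < G) (Hm0 : 0 < m0) (HAg : 0 < Ag) (HBg : 0 < Bg)
  (Hfc : 0 < fc) (Hft : 0 < ft) (Hrtr : 0 <= rtr) :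
  (forall gamma, 0 <= gamma -> exists! p, eq_p K Ag Bg fc ft ptr gamma p) /\
  (forall gamma, 0 <= gamma -> exists! rho, eq_rho G m0 fc rtr gamma rho) /\
  (forall phat rhohat : R -> R,
     (forall gamma, 0 <= gamma -> eq_p K Ag Bg fc ft ptr gamma (phat gamma)) ->
     (forall gamma, 0 <= gamma -> eq_rho G m0 fc rtr gamma (rhohat gamma)) ->
     smooth_on_Rplus phat /\
     decreasing_on (fun gamma => 0 <= gamma) phat /\
     decreasing_on (fun gamma => 0 <= gamma < sqrt 6 * fc * rtr / (2 * G * m0)) rhohat /\
     (forall gamma, 0 <= gamma ->
        rhohat gamma = / (1 + gamma * (6 * G / fc ^ 2)) *
                       pos_part (rtr - gamma * (2 * G * m0 / (sqrt 6 * fc))))).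
Proof.
  pose proof (eq_p_iff_pressure_map K Ag Bg fc ft ptr HK HAg HBg Hfc) as Hp.
  assert (Hr : forall gamma r, 0 <= gamma ->
            eq_rho G m0 fc rtr gamma r <-> r = rho_closed G m0 fc rtr gamma)
    by (intros; apply eq_rho_iff_rho_closed; auto; lra).
  split; [|split].
  - intros gamma hg. apply ex_unique_of_iff with (pressure_map K Ag Bg fc ft ptr gamma).
    intros p. apply Hp, hg.
  - intros gamma hg. apply ex_unique_of_iff with (rho_closed G m0 fc rtr gamma).
    intros r. apply Hr, hg.
  - intros phat rhohat Hphat Hrhohat.
    assert (phat_eq : forall gamma, 0 <= gamma ->
              phat gamma = pressure_map K Ag Bg fc ft ptr gamma)
      by (intros gamma hg; apply Hp, Hphat; exact hg).
    assert (rhohat_eq : forall gamma, 0 <= gamma ->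
              rhohat gamma = rho_closed G m0 fc rtr gamma)
      by (intros gamma hg; apply Hr, Hrhohat; exact hg).
    split; [|split; [|split]].
    + apply smooth_on_Rplus_ext with (1 := phat_eq), pressure_map_smooth; assumption.
    + apply decreasing_on_ext with (1 := phat_eq), pressure_map_decreasing; assumption.
    + apply decreasing_on_ext with (g := rho_closed G m0 fc rtr).
      * intros gamma [hg _]. apply rhohat_eq, hg.
      * apply rho_closed_decreasing; assumption.
    + exact rhohat_eq.
Qed.
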